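(* Let $X$ be a type variable, $A$ and $G$ types of system $\mathcal F$, $O$ a type constant and $\alpha$ a term variable. Then $\alpha:O\vdash_{\mathcal F} T_A : A[G/X]\rightarrow A[G^o/X]$ and $\alpha:O\vdash_{\mathcal F} T'_A : A[G^o/X]\rightarrow A[G/X]$.
   Context: Types of system $\mathcal F$ are built from type variables and type constants (atomic, not quantifiable; $O$ is one) with $\rightarrow$, $\forall$; $A[G/X]$ is capture-avoiding substitution. Typing: (ax) $\Gamma \vdash x_i : A_i$ for $x_i:A_i\in\Gamma$; ($\rightarrow_i$) from $\Gamma, x:B \vdash t : C$ infer $\Gamma \vdash \lambda x t : B \rightarrow C$; ($\rightarrow_e$) from $\Gamma \vdash u : B\rightarrow C$, $\Gamma \vdash v : B$ infer $\Gamma \vdash (u)v : C$; ($\forall_i$) from $\Gamma \vdash t : A$, $Y$ not free in $\Gamma$, infer $\Gamma \vdash t : \forall Y A$; ($\forall_e$) from $\Gamma \vdash t : \forall Y A$ infer $\Gamma \vdash t : A[C/Y]$. For types $A,B$: $A\wedge B=\forall Z\{(A\rightarrow(B\rightarrow Z))\rightarrow Z\}$ ($Z$ not free in $A,B$), and $G^o$ denotes $O\rightarrow G\wedge O$. Let $\mathbf 1=\lambda x\lambda y\,x$. For a type $F$, the $\lambda$-terms $T_F,T'_F$ (depending on the fixed $X$ and $\alpha$; bound variables $x,y,\beta,g$ chosen distinct from $\alpha$) are defined by induction on $F$: if $X$ is not free in $F$, $T_F=T'_F=\lambda x\,x$; otherwise, if $F=X$, $T_F=\lambda x\lambda\beta\lambda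 g\,(g)x\alpha$ and $T'_F=\lambda x\,(x)\alpha\mathbf 1$; if $F=C\rightarrow D$, $T_F=\lambda x\lambda y\,(T_D)(x)(T'_C)y$ and $T'_F=\lambda x\lambda y\,(T'_D)(x)(T_C)y$; if $F=\forall Y B$, $T_F=\lambda x\,(T_B)x$ and $T'_F=\lambda x\,(T'_B)x$. *)

(* System F (Curry style) with de Bruijn indices for TYPE
   variables and named TERM variables. *)
From Stdlib Require Import Arith List.
Import ListNotations.

(* Types: type variables (de Bruijn indices), type constants (atomic,
   labelled by nat, not quantifiable), arrow, universal quantification. *)
Inductive ty : Type :=
  | TVar : nat -> ty
  | TConst : nat -> ty
  | TArr : ty -> ty -> ty
  | TAll : ty -> ty.

Fixpoint shift_ty (c : nat) (A : ty) : ty :=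
  match A with
  | TVar n => if Nat.ltb n c then TVar n else TVar (S n)
  | TConst k => TConst k
  | TArr B C => TArr (shift_ty c B) (shift_ty c C)
  | TAll B => TAll (shift_ty (S c) B)
  end.

(* A[G/X] for a free variable X: replace the free variable X by G (capture
   avoiding, since G is lifted under binders); other free variables are
   untouched (exactly as named substitution). *)
Fixpoint subst_ty (X : nat) (G : ty) (A : ty) : ty :=
  match A with
  | TVar n => if Nat.eqb n X then G else TVar n
  | TConst k => TConst k
  | TArr B C => TArr (subst_ty X G B) (subst_ty X G C)
  | TAll B => TAll (subst_ty (S X) (shift_ty 0 G) B)
  end.

(* B[C/Y] in rule (forall_e) is
   open_ty 0 C B. *)
Fixpoint open_ty (k : nat) (C : ty) (A : ty) : ty :=
  match A with
  | TVar n => if Nat.eqb n k then C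
              else if Nat.ltb n k then TVar n else TVar (pred n)
  | TConst c => TConst c
  | TArr B D => TArr (open_ty k C B) (open_ty k C D)
  | TAll B => TAll (open_ty (S k) (shift_ty 0 C) B)
  end.

Fixpoint free_in (X : nat) (A : ty) : bool :=
  match A with
  | TVar n => Nat.eqb n X
  | TConst _ => false
  | TArr B C => free_in X B || free_in X C
  | TAll B => free_in (S X) B
  end.

(* A /\ B = forall Z ((A -> (B -> Z)) -> Z), Z not free in A, B. *)
Definition ty_and (A B : ty) : ty :=
  TAll (TArr (TArr (shift_ty 0 A) (TArr (shift_ty 0 B) (TVar 0))) (TVar 0)).

(* G^o = O -> G /\ O, where O is the type constant with label o. *)
Definition ty_o (o : nat) (G : ty) : ty :=
  TArr (TConst o) (ty_and G (TConst o)).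

Inductive term : Type :=
  | Var : nat -> term
  | Lam : nat -> term -> term
  | App : term -> term -> term.

(* Contexts: lists of declarations, most recent first; Gamma, x:B is
   (x,B) :: Gamma (a new declaration of x shadows older ones). *)
Definition ctx := list (nat * ty).

Fixpoint lookup (x : nat) (Gamma : ctx) : option ty :=
  match Gamma with
  | [] => None
  | (y, A) :: Gamma' => if Nat.eqb x y then Some A else lookup x Gamma'
  end.

Definition shift_ctx (Gamma : ctx) : ctx :=
  map (fun p => (fst p, shift_ty 0 (snd p))) Gamma.

(* With de Bruijn indices, rule (forall_i)
   "Y not free in Gamma" becomes: the premise is typed in the context with
   all free type variables lifted (so index 0 is fresh for it). *)
Inductive typing : ctx -> term -> ty -> Prop :=
  | T_ax : forall Gamma x A, lookup x Gamma = Some A -> typing Gamma (Var x) A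
  | T_arr_i : forall Gamma x t B C,
      typing ((x, B) :: Gamma) t C -> typing Gamma (Lam x t) (TArr B C)
  | T_arr_e : forall Gamma u v B C,
      typing Gamma u (TArr B C) -> typing Gamma v B -> typing Gamma (App u v) C
  | T_all_i : forall Gamma t A,
      typing (shift_ctx Gamma) t A -> typing Gamma t (TAll A)
  | T_all_e : forall Gamma t A C,
      typing Gamma t (TAll A) -> typing Gamma t (open_ty 0 C A).

Definition one (x y : nat) : term := Lam x (Lam y (Var x)).

Definition idt (x : nat) : term := Lam x (Var x).

Fixpoint TT (alpha x y beta g : nat) (X : nat) (F : ty) : term * term :=
  if negb (free_in X F) then (idt x, idt x) else
  match F with
  | TVar _ =>
      (Lam x (Lam beta (Lam g (App (App (Var g) (Var x)) (Var alpha)))),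
       Lam x (App (App (Var x) (Var alpha)) (one x y)))
  | TConst _ => (idt x, idt x)
  | TArr C D =>
      let (TC, T'C) := TT alpha x y beta g X C in
      let (TD, T'D) := TT alpha x y beta g X D in
      (Lam x (Lam y (App TD (App (Var x) (App T'C (Var y))))),
       Lam x (Lam y (App T'D (App (Var x) (App TC (Var y))))))
  | TAll B =>
      let (TB, T'B) := TT alpha x y beta g (S X) B in
      (Lam x (App TB (Var x)), Lam x (App T'B (Var x)))
  end.

(* Where X does not occur both terms are the identity.
   At A = X, T_X pairs its argument with alpha : O (the extra argument beta
   of G^o is ignored) and T'_X projects the pair back to G with the first
   projection 1.  Arrows and quantifiers are handled functorially: T_{C->D}
   is contravariant in C, hence uses T'_C, and T_{forall Y B} acts under the
   binder.  Because the quantifier case moves the context under a binder,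
   the induction runs over every context in which alpha : O. *)
From Stdlib Require Import List Arith Lia.
Import ListNotations.

Lemma shift_ty_comm (A : ty) (c c' : nat) : c' <= c ->
  shift_ty (S c) (shift_ty c' A) = shift_ty c' (shift_ty c A).
Proof.
  revert c c'; induction A as [n | k | B IHB C IHC | B IHB]; intros c c' Hle; simpl.
  - destruct (Nat.ltb_spec n c'), (Nat.ltb_spec n c); simpl;
      repeat match goal with |- context [Nat.ltb ?a ?b] => destruct (Nat.ltb_spec a b) end;
      solve [reflexivity | lia].
  - reflexivity.
  - now rewrite IHB, IHC.
  - rewrite IHB; auto with arith.
Qed.

Lemma open_shift_ty (A C : ty) (k : nat) : open_ty k C (shift_ty k A) = A.
Proof.
  revert k C; induction A as [n | k' | B IHB D IHD | B IHB]; intros k C; simpl.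
  - destruct (Nat.ltb_spec n k); cbn -[Nat.eqb Nat.ltb];
      repeat match goal with |- context [?a =? ?b] => destruct (Nat.eqb_spec a b)
                           | |- context [?a <? ?b] => destruct (Nat.ltb_spec a b) end;
      solve [reflexivity | lia].
  - reflexivity.
  - now rewrite IHB, IHD.
  - now rewrite IHB.
Qed.

Lemma open_var_shift_ty (A : ty) (k : nat) : open_ty k (TVar k) (shift_ty (S k) A) = A.
Proof.
  revert k; induction A as [n | k' | B IHB D IHD | B IHB]; intros k; simpl.
  - destruct (Nat.ltb_spec n (S k)); cbn -[Nat.eqb Nat.ltb];
      repeat match goal with |- context [?a =? ?b] => destruct (Nat.eqb_spec a b)
                           | |- context [?a <? ?b] => destruct (Nat.ltb_spec a b) end;
      solve [subst; reflexivity | lia].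
  - reflexivity.
  - now rewrite IHB, IHD.
  - now rewrite IHB.
Qed.

Lemma subst_ty_notfree (A G : ty) (X : nat) : free_in X A = false -> subst_ty X G A = A.
Proof.
  revert X G; induction A as [n | k | B IHB C IHC | B IHB]; intros X G Hfree; simpl in *.
  - now rewrite Hfree.
  - reflexivity.
  - apply Bool.orb_false_iff in Hfree as [HB HC]. now rewrite IHB, IHC.
  - now rewrite IHB.
Qed.

Lemma shift_ty_o (o : nat) (G : ty) : shift_ty 0 (ty_o o G) = ty_o o (shift_ty 0 G).
Proof.
  unfold ty_o, ty_and; simpl. now rewrite shift_ty_comm by lia.
Qed.

Lemma lookup_shift_ctx (z : nat) (Gamma : ctx) :
  lookup z (shift_ctx Gamma) = option_map (shift_ty 0) (lookup z Gamma).
Proof.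
  induction Gamma as [| [w B] Gamma IH]; simpl; auto.
  now destruct (z =? w).
Qed.

Lemma lookup_cons_neq (z w : nat) (B : ty) (Gamma : ctx) :
  z <> w -> lookup z ((w, B) :: Gamma) = lookup z Gamma.
Proof. intros Hneq; simpl. now destruct (Nat.eqb_spec z w). Qed.

Lemma typing_var_head (Gamma : ctx) (z : nat) (A : ty) : typing ((z, A) :: Gamma) (Var z) A.
Proof. apply T_ax; simpl. now rewrite Nat.eqb_refl. Qed.

Lemma typing_and_elim (Gamma : ctx) (t : term) (A B C : ty) :
  typing Gamma t (ty_and A B) -> typing Gamma t (TArr (TArr A (TArr B C)) C).
Proof.
  intros Ht. apply T_all_e with (C := C) in Ht. simpl in Ht.
  now rewrite !open_shift_ty in Ht.
Qed.

Lemma typing_inst_var (Gamma : ctx) (t : term) (A : ty) :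
  typing Gamma t (TAll (shift_ty 1 A)) -> typing Gamma t A.
Proof.
  intros Ht. rewrite <- (open_var_shift_ty A 0). now apply T_all_e.
Qed.

Section Translations.

Variables (o alpha x y beta g : nat).
Hypotheses (alpha_x : alpha <> x) (alpha_y : alpha <> y) (alpha_beta : alpha <> beta)
  (alpha_g : alpha <> g) (x_y : x <> y) (x_beta : x <> beta) (x_g : x <> g).

Definition typable (t : term) (A : ty) : Prop :=
  forall Gamma, lookup alpha Gamma = Some (TConst o) -> typing Gamma t A.

Lemma lookup_alpha_shift_ctx (Gamma : ctx) :
  lookup alpha Gamma = Some (TConst o) -> lookup alpha (shift_ctx Gamma) = Some (TConst o).
Proof. intros Halpha. now rewrite lookup_shift_ctx, Halpha. Qed.

Lemma typable_idt (A : ty) : typable (idt x) (TArr A A).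
Proof. intros Gamma _. apply T_arr_i, typing_var_head. Qed.

Lemma typable_pair_alpha (G : ty) :
  typable (Lam x (Lam beta (Lam g (App (App (Var g) (Var x)) (Var alpha)))))
    (TArr G (ty_o o G)).
Proof.
  intros Gamma Halpha.
  apply T_arr_i, T_arr_i, T_all_i, T_arr_i; simpl.
  apply T_arr_e with (TConst o); [apply T_arr_e with (shift_ty 0 G) |].
  - apply typing_var_head.
  - apply T_ax. now rewrite !lookup_cons_neq by congruence; simpl; rewrite Nat.eqb_refl.
  - apply T_ax. rewrite !lookup_cons_neq by congruence.
    now apply lookup_alpha_shift_ctx.
Qed.

Lemma typable_first_proj (G : ty) :
  typable (Lam x (App (App (Var x) (Var alpha)) (one x y))) (TArr (ty_o o G) G).
Proof.
  intros Gamma Halpha. apply T_arr_i.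
  apply T_arr_e with (TArr G (TArr (TConst o) G)).
  - apply typing_and_elim.
    apply T_arr_e with (TConst o); [apply typing_var_head |].
    apply T_ax. now rewrite lookup_cons_neq.
  - apply T_arr_i, T_arr_i. apply T_ax.
    now rewrite lookup_cons_neq by congruence; simpl; rewrite Nat.eqb_refl.
Qed.

Lemma typable_arrow_map (TC' TD : term) (A1 A2 B1 B2 : ty) :
  typable TC' (TArr A2 A1) -> typable TD (TArr B1 B2) ->
  typable (Lam x (Lam y (App TD (App (Var x) (App TC' (Var y))))))
    (TArr (TArr A1 B1) (TArr A2 B2)).
Proof.
  intros HC HD Gamma Halpha.
  assert (Hinner : lookup alpha ((y, A2) :: (x, TArr A1 B1) :: Gamma) = Some (TConst o))
    by now rewrite !lookup_cons_neq.
  apply T_arr_i, T_arr_i.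
  apply T_arr_e with B1; [now apply HD |].
  apply T_arr_e with A1.
  - apply T_ax. now rewrite lookup_cons_neq by congruence; simpl; rewrite Nat.eqb_refl.
  - apply T_arr_e with A2; [now apply HC | apply typing_var_head].
Qed.

Lemma typable_all_map (T : term) (B1 B2 : ty) :
  typable T (TArr B1 B2) -> typable (Lam x (App T (Var x))) (TArr (TAll B1) (TAll B2)).
Proof.
  intros HT Gamma Halpha.
  apply T_arr_i, T_all_i; simpl.
  apply T_arr_e with B1.
  - apply HT. rewrite lookup_cons_neq by assumption. now apply lookup_alpha_shift_ctx.
  - apply typing_inst_var, typing_var_head.
Qed.

Lemma TT_typable (A : ty) : forall X G,
  typable (fst (TT alpha x y beta g X A)) (TArr (subst_ty X G A) (subst_ty X (ty_o o G) A)) /\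
  typable (snd (TT alpha x y beta g X A)) (TArr (subst_ty X (ty_o o G) A) (subst_ty X G A)).
Proof.
  induction A as [n | k | C IHC D IHD | B IHB]; intros X G;
    cbn [TT]; match goal with |- context [free_in X ?F] => destruct (free_in X F) eqn:Hfree end;
    cbn [negb];
    try solve [rewrite !subst_ty_notfree by exact Hfree; split; apply typable_idt].
  - apply Nat.eqb_eq in Hfree as ->. simpl. rewrite Nat.eqb_refl.
    split; [apply typable_pair_alpha | apply typable_first_proj].
  - discriminate.
  - destruct (TT alpha x y beta g X C) as [TC T'C] eqn:EC.
    destruct (TT alpha x y beta g X D) as [TD T'D] eqn:ED.
    specialize (IHC X G); specialize (IHD X G); rewrite EC in IHC; rewrite ED in IHD.
    simpl in *. split; apply typable_arrow_map; tauto.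
  - destruct (TT alpha x y beta g (S X) B) as [TB T'B] eqn:EB.
    specialize (IHB (S X) (shift_ty 0 G)); rewrite EB in IHB.
    cbn [fst snd subst_ty] in *. rewrite shift_ty_o. split; apply typable_all_map; tauto.
Qed.

End Translations.

Theorem lemma3p1 (X : nat) (A G : ty) (o : nat) (alpha x y beta g : nat) :
  NoDup [alpha; x; y; beta; g] ->
  typing [(alpha, TConst o)] (fst (TT alpha x y beta g X A))
    (TArr (subst_ty X G A) (subst_ty X (ty_o o G) A)) /\
  typing [(alpha, TConst o)] (snd (TT alpha x y beta g X A))
    (TArr (subst_ty X (ty_o o G) A) (subst_ty X G A)).
Proof.
  intros Hnodup.
  apply NoDup_cons_iff in Hnodup as [Halpha Hnodup].
  apply NoDup_cons_iff in Hnodup as [Hx _].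
  simpl in Halpha, Hx.
  assert (Hctx : lookup alpha [(alpha, TConst o)] = Some (TConst o))
    by (simpl; now rewrite Nat.eqb_refl).
  destruct (TT_typable o alpha x y beta g) with (A := A) (X := X) (G := G)
    as [HT HT']; try (intros ->; tauto).
  split; [apply HT | apply HT']; exact Hctx.
Qed.
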